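(* Let $\mathcal M,\mathcal X,\mathcal Y$ be finite sets, $P_M$ a distribution on $\mathcal M$, $W_{Y|X}$ a channel from $\mathcal X$ to $\mathcal Y$. For every constant $c>0$ and every distribution $P_X$ on $\mathcal X$, \[ P_{js}(P_M,W_{Y|X})\le \sum_{\substack{(m,x,y):\\ P_M(m)P_X(x)W_{Y|X}(y|x)<cP_X(x)\bar W_Y(y)}}P_M(m)P_X(x)W_{Y|X}(y|x)\;+\;\sum_{\substack{(m,x,y):\\ P_M(m)P_X(x)W_{Y|X}(y|x)\ge cP_X(x)\bar W_Y(y)}}P_X(x)\bar W_Y(y), \] where $\bar W_Y(y):=\sum_x P_X(x)W_{Y|X}(y|x)$. Moreover, for fixed $P_M,P_X,W_{Y|X}$, the right-hand side, as a function of $c\in(0,\infty)$, attains its minimum at $c=1$.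
   Context: A code $\phi=(\mathsf e,\mathsf d)$ consists of an encoder $\mathsf e:\mathcal M\to\mathcal X$ and a decoder $\mathsf d:\mathcal Y\to\mathcal M$. Its average error probability is $P_{js}[\phi|P_M,W_{Y|X}]:=\sum_{m\in\mathcal M}P_M(m)\,W_{Y|X}(\{y:\mathsf d(y)\neq m\}|\mathsf e(m))$, and $P_{js}(P_M,W_{Y|X}):=\inf_\phi P_{js}[\phi|P_M,W_{Y|X}]$. The second sum on the right-hand side is the measure of the indicated set under $1_M\times P_X\times\bar W_Y$, where $1_M$ is the counting measure on $\mathcal M$. *)

From HB Require Import structures.
From mathcomp Require Import all_boot all_order all_algebra.
Set Implicit Arguments. Unset Strict Implicit. Unset Printing Implicit Defensive.
Import Order.TTheory GRing.Theory Num.Theory.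
Local Open Scope ring_scope.

Definition is_distr (R : realFieldType) (T : finType) (P : T -> R) : Prop :=
  (forall t, 0 <= P t) /\ \sum_(t : T) P t = 1.

Definition is_channel (R : realFieldType) (X Y : finType) (W : X -> Y -> R) : Prop :=
  forall x, is_distr (W x).

Definition code (M X Y : finType) : finType :=
  ({ffun M -> X} * {ffun Y -> M})%type.

Definition err_prob (R : realFieldType) (M X Y : finType)
  (PM : M -> R) (W : X -> Y -> R) (phi : code M X Y) : R :=
  \sum_(m : M) PM m * \sum_(y : Y | phi.2 y != m) W (phi.1 m) y.

(* P_js(P_M, W) = inf over all codes (a minimum, the code set being finite;
   conventionally 0 if there are no codes at all). *)
Definition Pjs (R : realFieldType) (M X Y : finType)
  (PM : M -> R) (W : X -> Y -> R) : R :=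
  match enum [set: code M X Y] with
  | [::] => 0
  | phi0 :: _ => \big[Num.min/err_prob PM W phi0]_(phi : code M X Y) err_prob PM W phi
  end.

Definition Wbar (R : realFieldType) (X Y : finType)
  (PX : X -> R) (W : X -> Y -> R) (y : Y) : R :=
  \sum_(x : X) PX x * W x y.

Definition rhs (R : realFieldType) (M X Y : finType)
  (PM : M -> R) (PX : X -> R) (W : X -> Y -> R) (c : R) : R :=
  \sum_(m : M) \sum_(x : X) \sum_(y : Y |
        PM m * PX x * W x y < c * PX x * Wbar PX W y)
      PM m * PX x * W x y
  + \sum_(m : M) \sum_(x : X) \sum_(y : Y |
        PM m * PX x * W x y >= c * PX x * Wbar PX W y)
      PX x * Wbar PX W y.

(** Random coding with a MAP decoder.  Draw the codewords of the encoder
    i.i.d. according to [P_X] and decode by maximising [P_M(m') W(y|e(m'))].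
    The decoder errs on [(m, y)] only if some other message beats [m], so the
    error is at most [min (P_M(m) W(y|e(m)), sum_(m' <> m) P_M(m') W(y|e(m')))].
    Averaging over the encoder with [e(m) = x] fixed, the two arguments of the
    minimum average to [P_M(m) P_X(x) W(y|x)] and at most [P_X(x) Wbar(y)];
    since the average of a minimum is at most the minimum of the averages, the
    best code does no worse than [sum min (P_M P_X W, P_X Wbar)], which is the
    right-hand side at [c = 1] and a lower bound for it at every [c]. *)
From mathcomp Require Import all_boot all_order all_algebra.
Import Order.TTheory GRing.Theory Num.Theory.
Local Open Scope ring_scope.

Lemma sum_mul_min_le {R : realFieldType} {I : finType} (w a b : I -> R) :
  (forall i, 0 <= w i) ->
  \sum_i w i * Num.min (a i) (b i) <=
  Num.min (\sum_i w i * a i) (\sum_i w i * b i).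
Proof.
move=> w_ge0; rewrite le_min; apply/andP; split; apply: ler_sum => i _;
  by apply: ler_wpM2l => //; rewrite ge_min lexx ?orbT.
Qed.

Lemma prod_if_eq {R : realFieldType} {I : finType} (i0 : I) (F : I -> R) :
  \prod_i (if i == i0 then F i else 1) = F i0.
Proof. by rewrite (bigD1 i0) //= eqxx big1 ?mulr1 // => i /negbTE ->. Qed.

Section ErrorProbability.

Context {R : realFieldType} {M X Y : finType} (PM : M -> R) (W : X -> Y -> R).

Lemma Pjs_le_err (phi : code M X Y) : Pjs PM W <= err_prob PM W phi.
Proof.
rewrite /Pjs; case E: (enum _) => [|phi0 s].
  by have := mem_enum [set: code M X Y] phi; rewrite E inE.
by rewrite (bigD1 phi) //= ge_min lexx.
Qed.

Lemma Pjs_le_avg {I : finType} (w : I -> R) (phi : I -> code M X Y) :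
  (forall i, 0 <= w i) -> \sum_i w i = 1 ->
  Pjs PM W <= \sum_i w i * err_prob PM W (phi i).
Proof.
move=> w_ge0 w_sum1; rewrite -[Pjs _ _]mul1r -w_sum1 mulr_suml.
by apply: ler_sum => i _; apply/ler_wpM2l/Pjs_le_err.
Qed.

Lemma Pjs_le0 : #|M| = 0%N -> Pjs PM W <= 0.
Proof.
move=> M0; case E: (enum [set: code M X Y]) => [|phi0 s].
  by rewrite /Pjs E.
apply: le_trans (Pjs_le_err phi0) _.
by rewrite /err_prob big_pred0 // => m; have := card0_eq M0 m; rewrite !inE.
Qed.

Hypotheses (PM_ge0 : forall m, 0 <= PM m) (W_ge0 : forall x y, 0 <= W x y).
Variable m0 : M.

Definition map_decoder (f : {ffun M -> X}) : {ffun Y -> M} :=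
  [ffun y => Order.arg_max m0 xpredT (fun m => PM m * W (f m) y)].

Lemma map_decoder_max (f : {ffun M -> X}) y m :
  PM m * W (f m) y <= PM (map_decoder f y) * W (f (map_decoder f y)) y.
Proof. by rewrite ffunE; case: arg_maxP => // i _; apply. Qed.

Lemma err_map_decoder_le (f : {ffun M -> X}) :
  err_prob PM W (f, map_decoder f) <=
  \sum_m \sum_y Num.min (PM m * W (f m) y)
                        (\sum_(m' | m' != m) PM m' * W (f m') y).
Proof.
rewrite /err_prob; apply: ler_sum => m _; rewrite mulr_sumr big_mkcond /=.
apply: ler_sum => y _.
have rival_ge0 : 0 <= \sum_(m' | m' != m) PM m' * W (f m') y.
  by apply: sumr_ge0 => m' _; apply: mulr_ge0.
case: ifP => [err|_]; last by rewrite le_min rival_ge0 mulr_ge0.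
rewrite le_min lexx /=; apply: le_trans (map_decoder_max f y m) _.
rewrite [leRHS](bigD1 (map_decoder f y)) ?err //= lerDl.
by apply: sumr_ge0 => m' _; apply: mulr_ge0.
Qed.

End ErrorProbability.

Section IidEncoder.

Context {R : realFieldType} {M X : finType} (PX : X -> R).
Hypothesis PX_sum1 : \sum_x PX x = 1.

Definition iid_weight (f : {ffun M -> X}) : R := \prod_i PX (f i).

Lemma iid_weight_prod (g : M -> X -> R) :
  \sum_f iid_weight f * \prod_i g i (f i) = \prod_i \sum_x PX x * g i x.
Proof.
rewrite (bigA_distr_bigA (fun i x => PX x * g i x)).
by apply: eq_bigr => f _; rewrite big_split.
Qed.

Lemma iid_weight_sum1 : \sum_f iid_weight f = 1.
Proof. by rewrite -(bigA_distr_bigA (fun _ : M => PX)) big1. Qed.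

Lemma iid_marginal (m : M) (g : X -> R) :
  \sum_f iid_weight f * g (f m) = \sum_x PX x * g x.
Proof.
transitivity (\sum_f iid_weight f * \prod_i (if i == m then g (f i) else 1)).
  by apply: eq_bigr => f _; rewrite prod_if_eq.
rewrite (iid_weight_prod (fun i x => if i == m then g x else 1)) (bigD1 m) //=.
rewrite eqxx [X in _ * X]big1 ?mulr1 // => i /negbTE i_m.
by under eq_bigr do rewrite i_m mulr1.
Qed.

Lemma iid_marginal2 (m m' : M) (g g' : X -> R) : m' != m ->
  \sum_f iid_weight f * (g (f m) * g' (f m')) =
  (\sum_x PX x * g x) * (\sum_x PX x * g' x).
Proof.
move=> m'_m.
transitivity (\sum_f iid_weight f * \prod_i ((if i == m then g (f i) else 1) *
                                            (if i == m' then g' (f i) else 1))).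
  by apply: eq_bigr => f _; rewrite big_split /= !prod_if_eq.
rewrite (iid_weight_prod (fun i x => (if i == m then g x else 1) *
                                    (if i == m' then g' x else 1))).
rewrite (bigD1 m) //= (bigD1 m') //= [X in _ * (_ * X)]big1 ?mulr1.
  rewrite !eqxx eq_sym (negbTE m'_m).
  by congr (_ * _); apply: eq_bigr => x _; rewrite ?mulr1 ?mul1r.
by move=> i /andP[/negbTE -> /negbTE ->]; under eq_bigr do rewrite !mulr1.
Qed.

End IidEncoder.

Section RandomCoding.

Context {R : realFieldType} {M X Y : finType}.
Variables (PM : M -> R) (PX : X -> R) (W : X -> Y -> R).
Hypotheses (PM_ge0 : forall m, 0 <= PM m) (PM_sum1 : \sum_m PM m = 1).
Hypotheses (PX_ge0 : forall x, 0 <= PX x) (PX_sum1 : \sum_x PX x = 1).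
Hypothesis W_ge0 : forall x y, 0 <= W x y.

Let rival (f : {ffun M -> X}) m y := \sum_(m' | m' != m) PM m' * W (f m') y.

Lemma iid_avg_min_rival_le m y :
  \sum_f iid_weight PX f * Num.min (PM m * W (f m) y) (rival f m y) <=
  \sum_x Num.min (PM m * PX x * W x y) (PX x * Wbar PX W y).
Proof.
pose at_x (f : {ffun M -> X}) x := iid_weight PX f * (f m == x)%:R.
have at_x_ge0 f x : 0 <= at_x f x by rewrite mulr_ge0 ?prodr_ge0 ?ler0n.
have at_x_sum x g : \sum_f at_x f x * g (f m) = PX x * g x.
  under eq_bigr do rewrite -mulrA.
  rewrite (iid_marginal _ PX_sum1 m (fun j => (j == x)%:R * g j)) (bigD1 x) //=.
  by rewrite eqxx mul1r big1 ?addr0 // => j /negbTE ->; rewrite mul0r mulr0.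
have -> : \sum_f iid_weight PX f * Num.min (PM m * W (f m) y) (rival f m y) =
          \sum_x \sum_f at_x f x * Num.min (PM m * W x y) (rival f m y).
  rewrite exchange_big; apply: eq_bigr => f _ /=.
  rewrite (bigD1 (f m)) //= /at_x eqxx mulr1 big1 ?addr0 // => x.
  by rewrite eq_sym => /negbTE ->; rewrite mulr0 mul0r.
apply: ler_sum => x _; apply: le_trans (sum_mul_min_le _ _ _ (at_x_ge0^~ x)) _.
have own_avg : \sum_f at_x f x * (PM m * W x y) = PM m * PX x * W x y.
  by rewrite (at_x_sum x (fun=> PM m * W x y)) mulrCA mulrA.
have rival_avg : \sum_f at_x f x * rival f m y <= PX x * Wbar PX W y.
  have -> : \sum_f at_x f x * rival f m y =
            \sum_(m' | m' != m) PM m' * (PX x * Wbar PX W y).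
    under eq_bigr do rewrite /rival mulr_sumr.
    rewrite exchange_big; apply: eq_bigr => m' m'_m /=.
    under eq_bigr do rewrite mulrCA -mulrA.
    rewrite -mulr_sumr (iid_marginal2 _ PX_sum1 _ _ (fun j => (j == x)%:R)
                          (fun j => W j y) m'_m).
    congr (_ * (_ * _)); rewrite (bigD1 x) //= eqxx mulr1 big1 ?addr0 //.
    by move=> j /negbTE ->; rewrite mulr0.
  rewrite -mulr_suml ler_piMl ?mulr_ge0 ?sumr_ge0 // => [x' _|].
    exact: mulr_ge0.
  by rewrite -PM_sum1 [leRHS](bigD1 m) //= lerDr.
by rewrite own_avg le_min ge_min lexx ge_min rival_avg orbT.
Qed.

Lemma Pjs_le_sum_min (m0 : M) :
  Pjs PM W <=
  \sum_m \sum_x \sum_y Num.min (PM m * PX x * W x y) (PX x * Wbar PX W y).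
Proof.
have w_ge0 (f : {ffun M -> X}) : 0 <= iid_weight PX f by apply: prodr_ge0.
apply: le_trans (Pjs_le_avg PM W (iid_weight PX)
  (fun f => (f, map_decoder PM W m0 f)) w_ge0 (iid_weight_sum1 _ PX_sum1)) _.
apply: (@le_trans _ _ (\sum_f iid_weight PX f *
    \sum_m \sum_y Num.min (PM m * W (f m) y) (rival f m y))).
  by apply: ler_sum => f _; apply/ler_wpM2l/err_map_decoder_le.
under eq_bigr do rewrite mulr_sumr; rewrite exchange_big /=.
apply: ler_sum => m _; rewrite [leRHS]exchange_big /=.
under eq_bigr do rewrite mulr_sumr; rewrite exchange_big /=.
by apply: ler_sum => y _; apply: iid_avg_min_rival_le.
Qed.

End RandomCoding.

Section RightHandSide.

Context {R : realFieldType} {M X Y : finType}.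
Variables (PM : M -> R) (PX : X -> R) (W : X -> Y -> R).

Lemma rhsE c : rhs PM PX W c = \sum_m \sum_x \sum_y
  (if PM m * PX x * W x y < c * PX x * Wbar PX W y then PM m * PX x * W x y
   else PX x * Wbar PX W y).
Proof.
rewrite /rhs -big_split; apply: eq_bigr => m _; rewrite -big_split.
apply: eq_bigr => x _; rewrite [RHS](bigID (fun y =>
  PM m * PX x * W x y < c * PX x * Wbar PX W y)) /=.
congr (_ + _); first by apply: eq_bigr => y ->.
by apply: eq_big => y; rewrite leNgt // => /negbTE ->.
Qed.

Lemma rhs1E : rhs PM PX W 1 =
  \sum_m \sum_x \sum_y Num.min (PM m * PX x * W x y) (PX x * Wbar PX W y).
Proof.
by rewrite rhsE; do 3!(apply: eq_bigr => ? _); rewrite mul1r minElt.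
Qed.

Lemma sum_min_le_rhs c :
  \sum_m \sum_x \sum_y Num.min (PM m * PX x * W x y) (PX x * Wbar PX W y) <=
  rhs PM PX W c.
Proof.
rewrite rhsE; do 3!(apply: ler_sum => ? _).
by case: ifP; rewrite ge_min lexx ?orbT.
Qed.

End RightHandSide.

Theorem mainTheorem1 (R : realFieldType) (M X Y : finType)
  (PM : M -> R) (W : X -> Y -> R) (PX : X -> R) :
  is_distr PM -> is_channel W -> is_distr PX ->
  (forall c : R, 0 < c -> Pjs PM W <= rhs PM PX W c) /\
  (forall c : R, 0 < c -> rhs PM PX W 1 <= rhs PM PX W c).
Proof.
move=> [PM_ge0 PM_sum1] W_distr [PX_ge0 PX_sum1].
have W_ge0 x y : 0 <= W x y by case: (W_distr x).
split=> c _; last by rewrite rhs1E sum_min_le_rhs.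
apply: le_trans (sum_min_le_rhs PM PX W c).
have [M0|/card_gt0P[m0 _]] := posnP #|M|.
  by rewrite big_pred0 ?Pjs_le0 // => m; have := card0_eq M0 m; rewrite !inE.
exact: Pjs_le_sum_min.
Qed.
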